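(* Let $P(x)=a_0(x^2-a_1^2)\cdots(x^2-a_n^2)$ with $a_0\ne0$ and $0<a_1\le\cdots\le a_n$. Then $P(x)/x^j$ for $j=0,\ldots,2n$; $P^{(1)}(x)/x^j$ for $j=0,\ldots,2n-2$; and $P^{(2)}(x)/x^j$ for $j=0,\ldots,2n-4$ are strictly monotonically increasing for $x>a_n$ when $a_0>0$, and strictly monotonically decreasing for $x>a_n$ when $a_0<0$.
   Context: $P^{(l)}$ denotes the $l$-th derivative of $P$. *)

From HB Require Import structures.
From mathcomp Require Import all_boot all_order all_algebra.
Set Implicit Arguments. Unset Strict Implicit. Unset Printing Implicit Defensive.
Import Order.TTheory GRing.Theory Num.Theory.
Local Open Scope ring_scope.

Definition Ppoly (R : comNzRingType) (n : nat) (a0 : R) (a : nat -> R) : {poly R} :=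
  a0 *: \prod_(1 <= i < n.+1) ('X^2 - (a i ^+ 2)%:P).

Definition strictly_increasing_gt (R : realDomainType) (c : R) (f : R -> R) :=
  forall x y : R, c < x -> x < y -> f x < f y.
Definition strictly_decreasing_gt (R : realDomainType) (c : R) (f : R -> R) :=
  forall x y : R, c < x -> x < y -> f y < f x.

(** Write [Q = (X^2 - a_1^2) ... (X^2 - a_n^2)], so that [P = a0 Q], and
[g_d(q)(x) = q(x) / x^d].  Say [q] is good with weight [d] on [x > c] when
[g_(d+2)(q)] is positive and strictly increasing there while [g_(d+1)(q')] and
[g_d(q'')] are positive and nondecreasing.  A factor [X^2 - b^2] with
[0 < b <= c] is good with weight 0: [g_2] of it is [1 - b^2/x^2], and [g_1] of
[2X], [g_0] of [2] are positive constants.  Since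
[g_(d1+d2)(q1 q2) = g_d1(q1) g_d2(q2)], the Leibniz rule shows that the product
of goods with weights [e] and [d] is good with weight [e + d + 2]; hence [Q] is
good with weight [2n - 2].  Dividing by a smaller power [x^j] instead multiplies
these ratios by the nondecreasing [x^(d-j)], strictly increasing when [j < d]. *)
From HB Require Import structures.
From mathcomp Require Import all_boot all_order all_algebra.
From mathcomp Require Import lra zify.
Import Order.TTheory GRing.Theory Num.Theory.
Set Implicit Arguments. Unset Strict Implicit.
Local Open Scope ring_scope.

Definition ratioXn (R : realFieldType) (q : {poly R}) (d : nat) (x : R) :=
  q.[x] / x ^+ d.

Lemma ratioXnM (R : realFieldType) (q1 q2 : {poly R}) d1 d2 x :
  ratioXn (q1 * q2) (d1 + d2) x = ratioXn q1 d1 x * ratioXn q2 d2 x.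
Proof. by rewrite /ratioXn hornerM exprD invfM mulrACA. Qed.

Lemma ratioXnD (R : realFieldType) (q1 q2 : {poly R}) d x :
  ratioXn (q1 + q2) d x = ratioXn q1 d x + ratioXn q2 d x.
Proof. by rewrite /ratioXn hornerD mulrDl. Qed.

Lemma ratioXn_shift (R : realFieldType) (q : {poly R}) d j x :
  (j <= d)%N -> 0 < x -> q.[x] / x ^+ j = ratioXn q d x * x ^+ (d - j).
Proof.
move=> jd x_gt0; have xn_neq0 k : x ^+ k != 0 by rewrite expf_neq0 // gt_eqF.
rewrite /ratioXn -{1}(subnK jd) exprD invfM.
by rewrite [_^-1 * _]mulrC mulrA mulfVK.
Qed.

Section RatioMonotone.
Variables (R : realFieldType) (c : R).

Definition ratio_nondecr (q : {poly R}) (d : nat) := forall x y, c < x -> x < y ->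
  0 < ratioXn q d x /\ ratioXn q d x <= ratioXn q d y.

Definition ratio_incr (q : {poly R}) (d : nat) := forall x y, c < x -> x < y ->
  0 < ratioXn q d x /\ ratioXn q d x < ratioXn q d y.

Lemma ratio_incr_nondecr q d : ratio_incr q d -> ratio_nondecr q d.
Proof. by move=> h x y cx xy; have [? /ltW] := h x y cx xy. Qed.

Lemma ratio_nondecrM q1 q2 d1 d2 :
  ratio_nondecr q1 d1 -> ratio_nondecr q2 d2 -> ratio_nondecr (q1 * q2) (d1 + d2).
Proof.
move=> h1 h2 x y cx xy; rewrite !ratioXnM.
have [p1 l1] := h1 x y cx xy; have [p2 l2] := h2 x y cx xy.
by split; [exact: mulr_gt0 | nra].
Qed.

Lemma ratio_incrM q1 q2 d1 d2 :
  ratio_incr q1 d1 -> ratio_incr q2 d2 -> ratio_incr (q1 * q2) (d1 + d2).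
Proof.
move=> h1 h2 x y cx xy; rewrite !ratioXnM.
have [p1 l1] := h1 x y cx xy; have [p2 l2] := h2 x y cx xy.
by split; [exact: mulr_gt0 | nra].
Qed.

Lemma ratio_nondecrD q1 q2 d :
  ratio_nondecr q1 d -> ratio_nondecr q2 d -> ratio_nondecr (q1 + q2) d.
Proof.
move=> h1 h2 x y cx xy; rewrite !ratioXnD.
have [p1 l1] := h1 x y cx xy; have [p2 l2] := h2 x y cx xy.
by split; [exact: addr_gt0 | lra].
Qed.

Lemma ratio_nondecrMn q d m :
  ratio_nondecr q d -> ratio_nondecr (q *+ m.+1) d.
Proof.
move=> h; elim: m => [|m IH]; first by rewrite mulr1n.
by rewrite mulrSr; exact: ratio_nondecrD.
Qed.

Lemma ratio_nondecr1 : ratio_nondecr 1 0.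
Proof. by move=> x y _ _; rewrite /ratioXn !hornerC !expr0 !divr1 ltr01. Qed.

Hypothesis c_ge0 : 0 <= c.

Lemma ratio_nondecrX : ratio_nondecr 'X 1.
Proof.
move=> x y cx xy; have x_gt0 := le_lt_trans c_ge0 cx.
by rewrite /ratioXn !hornerX !expr1 !divff ?gt_eqF ?(lt_trans x_gt0 xy).
Qed.

Definition quad (b : R) : {poly R} := 'X^2 - (b ^+ 2)%:P.

Lemma ratio_incr_quad b : 0 < b <= c -> ratio_incr (quad b) 2.
Proof.
case/andP=> b_gt0 bc x y cx xy; rewrite /ratioXn /quad !hornerE.
have x2_gt0 : 0 < x ^+ 2 by rewrite exprn_gt0 //; lra.
have b2_lt : b ^+ 2 < x ^+ 2 by rewrite ltrXn2r //; lra.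
have xy2 : x ^+ 2 < y ^+ 2 by rewrite ltrXn2r //; lra.
have b2_gt0 : 0 < b ^+ 2 by rewrite exprn_gt0.
split; first by rewrite divr_gt0 // subr_gt0.
rewrite ltr_pdivrMr; last lra.
by rewrite mulrAC ltr_pdivlMr //; nra.
Qed.

Definition ratio_derivs (Q : {poly R}) (d : nat) :=
  [/\ ratio_incr Q d.+2, ratio_nondecr Q^`() d.+1 & ratio_nondecr Q^`(2) d].

Lemma ratio_derivs_quad b : 0 < b <= c -> ratio_derivs (quad b) 0.
Proof.
move=> hb; have dquad : (quad b)^`() = 'X *+ 2.
  by rewrite /quad derivB derivXn derivC subr0 expr1.
split; first exact: ratio_incr_quad.
- by rewrite dquad; apply: ratio_nondecrMn; exact: ratio_nondecrX.
- by rewrite derivnS derivn1 dquad derivMn derivX; exact: ratio_nondecrMn ratio_nondecr1.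
Qed.

Lemma ratio_derivsM p q e d :
  ratio_derivs p e -> ratio_derivs q d -> ratio_derivs (p * q) (e + d).+2.
Proof.
move=> [hp hp1 hp2] [hq hq1 hq2].
have hp0 := ratio_incr_nondecr hp; have hq0 := ratio_incr_nondecr hq.
rewrite derivnS derivn1 in hp2; rewrite derivnS derivn1 in hq2.
rewrite /ratio_derivs derivnS derivn1 !derivM derivD !derivM; split.
- by have := ratio_incrM hp hq; rewrite !(addSn, addnS).
- apply: ratio_nondecrD.
  + by have := ratio_nondecrM hp1 hq0; rewrite !(addSn, addnS).
  + by have := ratio_nondecrM hp0 hq1; rewrite !(addSn, addnS).
- apply: ratio_nondecrD; first apply: ratio_nondecrD.
  + by have := ratio_nondecrM hp2 hq0; rewrite !(addSn, addnS).
  + by have := ratio_nondecrM hp1 hq1; rewrite !(addSn, addnS).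
  + apply: ratio_nondecrD.
    * by have := ratio_nondecrM hp1 hq1; rewrite !(addSn, addnS).
    * by have := ratio_nondecrM hp0 hq2; rewrite !(addSn, addnS).
Qed.

Lemma ratio_derivs_prod_quad b s : all (fun r => 0 < r <= c) (b :: s) ->
  ratio_derivs (\prod_(r <- b :: s) quad r) (size s).*2.
Proof.
elim: s b => [|b' s IH] b /= /andP[hb hs].
  by rewrite big_seq1; exact: ratio_derivs_quad.
by rewrite big_cons; exact: ratio_derivsM (ratio_derivs_quad hb) (IH _ hs).
Qed.

Lemma ratio_incr_divXn q d j : ratio_incr q d -> (j <= d)%N ->
  strictly_increasing_gt c (fun x => q.[x] / x ^+ j).
Proof.
move=> h jd x y cx xy; have x_gt0 := le_lt_trans c_ge0 cx.
rewrite !(ratioXn_shift _ jd) //; last exact: lt_trans xy.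
have [p l] := h x y cx xy.
have xn_gt0 : 0 < x ^+ (d - j) by rewrite exprn_gt0.
have xyn : x ^+ (d - j) <= y ^+ (d - j) by rewrite lerXn2r ?nnegrE; lra.
nra.
Qed.

Lemma ratio_nondecr_divXn q d j : ratio_nondecr q d -> (j < d)%N ->
  strictly_increasing_gt c (fun x => q.[x] / x ^+ j).
Proof.
move=> h jd x y cx xy; have x_gt0 := le_lt_trans c_ge0 cx.
rewrite !(ratioXn_shift _ (ltnW jd)) //; last exact: lt_trans xy.
have [p l] := h x y cx xy.
have xn_gt0 : 0 < x ^+ (d - j) by rewrite exprn_gt0.
have xyn : x ^+ (d - j) < y ^+ (d - j) by rewrite ltrXn2r ?subn_eq0 -?ltnNge //; lra.
nra.
Qed.

Lemma ratio_derivs_divXn Q d l j : ratio_derivs Q d -> (l <= 2)%N ->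
  (j + 2 * l <= d.+2)%N -> strictly_increasing_gt c (fun x => Q^`(l).[x] / x ^+ j).
Proof.
case=> hQ hQ1 hQ2; case: l => [|[|[|//]]] _ hj.
- by apply: ratio_incr_divXn hQ _; lia.
- by apply: ratio_nondecr_divXn hQ1 _; lia.
- by apply: ratio_nondecr_divXn hQ2 _; lia.
Qed.

End RatioMonotone.

Lemma roots_in_range (R : realFieldType) (a : nat -> R) n :
  0 < a 1%N -> (forall i, (1 <= i < n)%N -> a i <= a i.+1) ->
  all (fun b => 0 < b <= a n) [seq a i | i <- iota 1 n].
Proof.
move=> a1_gt0 hmono.
have a_le : {in [pred i | 1 <= i <= n]%N &, {homo a : i j / (i <= j)%N >-> i <= j}}.
  apply: homo_leq_in.
  - exact: lexx.
  - exact: le_trans.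
  - move=> i j /andP[i1 _] /andP[_ jn] k /andP[ik kj].
    by rewrite inE (leq_trans i1 (ltnW ik)) (ltnW (leq_trans kj jn)).
  - by move=> i /andP[i1 _] /andP[_ iSn]; apply: hmono; rewrite i1.
apply/allP=> b /mapP[i]; rewrite mem_iota add1n ltnS => /andP[i1 iN] ->.
have n1 : (1 <= n)%N := leq_trans i1 iN.
by rewrite (lt_le_trans a1_gt0) ?a_le ?inE ?i1 ?iN ?n1 ?leqnn.
Qed.

Lemma Ppoly_prod_quad (R : realFieldType) n (a0 : R) (a : nat -> R) :
  Ppoly n a0 a = a0 *: \prod_(b <- [seq a i | i <- iota 1 n]) quad b.
Proof. by rewrite /Ppoly big_map /index_iota subn1. Qed.

Theorem lemmaB5 (R : realFieldType) (n : nat) (a0 : R) (a : nat -> R)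
  (hn : (1 <= n)%N) (ha0 : a0 != 0) (ha1 : 0 < a 1%N)
  (hmono : forall i : nat, (1 <= i < n)%N -> a i <= a i.+1) :
  let P := Ppoly n a0 a in
  let f := fun (l j : nat) (x : R) => (P^`(l)).[x] / x ^+ j in
  let ok := fun (l j : nat) => (j + 2 * l <= 2 * n)%N in
  (0 < a0 -> forall l j : nat, (l <= 2)%N -> ok l j ->
     strictly_increasing_gt (a n) (f l j)) /\
  (a0 < 0 -> forall l j : nat, (l <= 2)%N -> ok l j ->
     strictly_decreasing_gt (a n) (f l j)).
Proof.
case: n hn hmono => // n _ hmono P f ok.
have roots : all (fun b => 0 < b <= a n.+1) (a 1%N :: [seq a i | i <- iota 2 n]).
  exact: roots_in_range ha1 hmono.
have an_ge0 : 0 <= a n.+1.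
  by case/andP: roots => /andP[a1_gt0 /(lt_le_trans a1_gt0)/ltW].
pose Q := \prod_(b <- a 1%N :: [seq a i | i <- iota 2 n]) quad b.
have derivs : ratio_derivs (a n.+1) Q n.*2.
  by have := ratio_derivs_prod_quad an_ge0 roots; rewrite size_map size_iota.
have fE l j x : f l j x = a0 * (Q^`(l).[x] / x ^+ j).
  by rewrite /f /P Ppoly_prod_quad derivnZ hornerZ mulrA.
have incr l j : (l <= 2)%N -> ok l j ->
    strictly_increasing_gt (a n.+1) (fun x => Q^`(l).[x] / x ^+ j).
  move=> hl hj; apply: (ratio_derivs_divXn an_ge0 derivs hl); rewrite /ok in hj; lia.
split=> ha l j hl hj x y cx xy; rewrite !fE.
- by rewrite ltr_pM2l //; exact: incr.
- by rewrite ltr_nM2l //; exact: incr.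
Qed.
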